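(* Let $I\subseteq(0,1)$ be an interval forecast, and let $(D_i)_{i\in\mathbb N_0}$ be non-negative real supermartingale multipliers for $I$ such that $(D_i^{\circledcirc})_{i\in\mathbb N_0}$ is a recursive enumeration of lower semicomputable test supermartingales for $I$ (i.e. there is a recursive $q:\mathbb N_0\times\mathbb S\times\mathbb N_0\to\mathbb Q$ with $q(i,s,n+1)\ge q(i,s,n)$ and $\lim_nq(i,s,n)=D_i^{\circledcirc}(s)$ for all $i,s,n$). Then the process $T(s)=\sum_{i=0}^\infty2^{-i-1}D_i^{\circledcirc}(s)$, $s\in\mathbb S$, is a lower semicomputable test supermartingale for $I$.
   Context: $\mathcal X=\{0,1\}$, $\mathbb S=\bigcup_{n\ge0}\mathcal X^n$ (finite binary strings), $\square$ the empty string, $sx$ concatenation. Interval forecasts are nonempty closed intervals $I\subseteq[0,1]$; $\overline E_I(f)=\max_{p\in I}[pf(1)+(1-p)f(0)]$. A real multiplier process $D$ maps $\mathbb S$ to gambles $\mathcal X\to\mathbb R$; it is a supermartingale multiplier for $I$ if $\overline E_I(D(s))\le1$ for all $s$; it generates $D^{\circledcirc}(x_1,\dots,x_n)=\prod_{k=0}^{n-1}D(x_{1:k})(x_{k+1})$. A test supermartingale for $I$ is $T:\mathbb S\to\mathbb R_{\ge0}$ with $T(\square)=1$ and $\overline E_I(T(s\,\cdot)-T(s))\le0$ for all $s$; it is lower semicomputable if there is a recursive $r:\mathbb S\times\mathbb N_0\to\mathbb Q$ non-decreasing in $n$ with $T(s)=\lim_nr(s,n)$. *)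

From HB Require Import structures.
From mathcomp Require Import all_boot all_order all_algebra.
From mathcomp Require Import all_classical all_reals all_analysis.
Set Implicit Arguments. Unset Strict Implicit. Unset Printing Implicit Defensive.
Import Order.TTheory GRing.Theory Num.Theory numFieldNormedType.Exports.
Local Open Scope classical_set_scope.
Local Open Scope ring_scope.

(* Computability: mu-recursive (general recursive, total) functions    *)
(* of arity k, as maps seq nat -> nat (only inputs of size k matter).  *)

Fixpoint prim_rec (g : seq nat -> nat) (h : seq nat -> nat)
  (x : nat) (v : seq nat) : nat :=
  match x with
  | 0 => g v
  | x'.+1 => h (x' :: prim_rec g h x' v :: v)
  end.

Inductive murec : nat -> (seq nat -> nat) -> Prop :=
| mr_zero k : murec k (fun _ => 0%N)
| mr_succ : murec 1 (fun v => (nth 0%N v 0).+1)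
| mr_proj k i : (i < k)%N -> murec k (fun v => nth 0%N v i)
| mr_comp k m (h : seq nat -> nat) (gs : nat -> seq nat -> nat) :
    murec m h -> (forall i, (i < m)%N -> murec k (gs i)) ->
    murec k (fun v => h [seq gs i v | i <- iota 0 m])
| mr_prec k (g h : seq nat -> nat) :
    murec k g -> murec k.+2 h ->
    murec k.+1 (fun v => prim_rec g h (head 0%N v) (behead v))
| mr_min k (g : seq nat -> nat) (f : seq nat -> nat) :
    murec k.+1 g ->
    (forall v, g (f v :: v) = 0%N /\ forall y, (y < f v)%N -> g (y :: v) <> 0%N) ->
    murec k f.

Definition recursive_fun (k : nat) (f : seq nat -> nat) : Prop :=
  exists g, murec k g /\ forall v, size v = k -> g v = f v.

(* Goedel numbering of binary strings: bijective base-2 numeration. *)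
Fixpoint code_str (s : seq bool) : nat :=
  match s with
  | [::] => 0%N
  | b :: s' => (2 * code_str s' + (1 + b))%N
  end.

Definition rat_of (a b d : nat) : rat := ((a%:Z - b%:Z)%:~R / (d.+1)%:R).

Definition recursive_q3 (q : nat -> seq bool -> nat -> rat) : Prop :=
  exists a b d : seq nat -> nat,
    [/\ recursive_fun 3 a, recursive_fun 3 b, recursive_fun 3 d &
      forall i s n, q i s n =
        rat_of (a [:: i; code_str s; n]) (b [:: i; code_str s; n])
               (d [:: i; code_str s; n])].

Definition recursive_q2 (r : seq bool -> nat -> rat) : Prop :=
  exists a b d : seq nat -> nat,
    [/\ recursive_fun 2 a, recursive_fun 2 b, recursive_fun 2 d &
      forall s n, r s n =
        rat_of (a [:: code_str s; n]) (b [:: code_str s; n])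
               (d [:: code_str s; n])].

(* Imprecise-probability notions.  X = bool (1 = true), S = seq bool,  *)
(* sx = rcons s x.  An interval forecast I = [lo, hi].                 *)

Section Forecast.
Variable R : realType.

Definition upper_exp (lo hi : R) (f : bool -> R) : R :=
  sup [set p * f true + (1 - p) * f false | p in `[lo, hi]].

Definition supermart_multiplier (lo hi : R) (D : seq bool -> bool -> R) : Prop :=
  forall s, upper_exp lo hi (D s) <= 1.

Definition gen_process (D : seq bool -> bool -> R) (s : seq bool) : R :=
  \prod_(k < size s) D (take k s) (nth false s k).

Definition test_supermartingale (lo hi : R) (T : seq bool -> R) : Prop :=
  [/\ forall s, 0 <= T s,
      T [::] = 1 &
      forall s, upper_exp lo hi (fun x => T (rcons s x) - T s) <= 0].

Definition lower_semicomputable (T : seq bool -> R) : Prop :=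
  exists r : seq bool -> nat -> rat,
    [/\ recursive_q2 r,
        forall s n, r s n <= r s n.+1 &
        forall s, (fun n => (ratr (r s n) : R)) @ \oo --> T s].

End Forecast.

(* Each multiplier satisfies lo D(s)(1) <= 1 and (1 - hi) D(s)(0) <= 1, so
   D_i^o(s) <= (1/lo + 1/(1-hi))^|s| uniformly in i and the weighted series
   converges.  Its limit is a test supermartingale because the condition
   "upper expectation of the increment <= 0" is a family of linear inequalities,
   one for each p in I, and these survive nonnegative combinations and limits;
   the weights 2^-(i+1) sum to 1, which gives T(empty) = 1.
   For lower semicomputability take r(s,n) = sum_{i<n} 2^-(i+1) max(q(i,s,n),0):
   it is nondecreasing in n (more terms, each larger) and tends to T(s) by
   monotone convergence for series.  It is recursive because max(a-b,0)/(d+1) is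
   (a-b)/(d+1) with truncated subtraction and the numerator and denominator of a
   finite sum of fractions are computed by primitive recursion. *)

From HB Require Import structures.
From mathcomp Require Import all_boot all_order all_algebra.
From mathcomp Require Import all_classical all_reals all_analysis.
From mathcomp Require Import ring lra.
Import Order.TTheory GRing.Theory Num.Theory numFieldNormedType.Exports.
Local Open Scope classical_set_scope.
Local Open Scope ring_scope.
Set Implicit Arguments. Unset Strict Implicit.

Lemma recursive_ext k f g : recursive_fun k f ->
  (forall v, size v = k -> f v = g v) -> recursive_fun k g.
Proof. by move=> [h [hrec hf]] fg; exists h; split => // v vk; rewrite hf ?fg. Qed.

Lemma recursive_zero k : recursive_fun k (fun _ => 0%N).
Proof. by exists (fun _ => 0%N); split => //; constructor. Qed.

Lemma recursive_succ : recursive_fun 1 (fun v => (nth 0%N v 0).+1).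
Proof. by exists (fun v => (nth 0%N v 0).+1); split => //; constructor. Qed.

Lemma recursive_proj k i : (i < k)%N -> recursive_fun k (fun v => nth 0%N v i).
Proof. by move=> ik; exists (fun v => nth 0%N v i); split => //; constructor. Qed.
Arguments recursive_proj : clear implicits.

Lemma recursive_comp k m (gs : nat -> seq nat -> nat) h : recursive_fun m h ->
  (forall i, (i < m)%N -> recursive_fun k (gs i)) ->
  recursive_fun k (fun v => h [seq gs i v | i <- iota 0 m]).
Proof.
move=> [h' [h'rec h'h]] gsrec.
have /choice[gs' gs'P] : forall i, exists g, (i < m)%N ->
    murec k g /\ forall v, size v = k -> g v = gs i v.
  move=> i; case: (ltnP i m) => [/gsrec[g gP]|_]; first by exists g.
  by exists (fun _ => 0%N).
exists (fun v => h' [seq gs' i v | i <- iota 0 m]); split.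
  by apply: mr_comp => // i /gs'P[].
move=> v vk; rewrite h'h ?size_map ?size_iota //; congr h.
by apply/eq_in_map => i; rewrite mem_iota => /andP[_ /gs'P[_ ->]].
Qed.

Lemma recursive_comp1 k h g : recursive_fun 1 h -> recursive_fun k g ->
  recursive_fun k (fun v => h [:: g v]).
Proof. by move=> hrec grec; exact: (recursive_comp (gs := fun _ => g) hrec). Qed.

Lemma recursive_comp2 k h g1 g2 : recursive_fun 2 h ->
  recursive_fun k g1 -> recursive_fun k g2 ->
  recursive_fun k (fun v => h [:: g1 v; g2 v]).
Proof.
move=> hrec g1rec g2rec.
by apply: (recursive_comp (gs := fun i => if i is 0%N then g1 else g2) hrec) => -[].
Qed.

Lemma recursive_comp3 k h g1 g2 g3 : recursive_fun 3 h ->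
  recursive_fun k g1 -> recursive_fun k g2 -> recursive_fun k g3 ->
  recursive_fun k (fun v => h [:: g1 v; g2 v; g3 v]).
Proof.
move=> hrec g1rec g2rec g3rec.
apply: (recursive_comp
  (gs := fun i => match i with 0%N => g1 | 1%N => g2 | _ => g3 end) hrec).
by case=> [|[]].
Qed.

Lemma prim_rec_ext k g g' h h' x v : size v = k ->
  (forall w, size w = k -> g w = g' w) ->
  (forall w, size w = k.+2 -> h w = h' w) ->
  prim_rec g h x v = prim_rec g' h' x v.
Proof. by move=> vk gg' hh'; elim: x => [|x IH] /=; rewrite ?gg' // hh' /= ?vk ?IH. Qed.

Lemma recursive_prec k g h : recursive_fun k g -> recursive_fun k.+2 h ->
  recursive_fun k.+1 (fun v => prim_rec g h (head 0%N v) (behead v)).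
Proof.
move=> [g' [g'rec g'g]] [h' [h'rec h'h]].
exists (fun v => prim_rec g' h' (head 0%N v) (behead v)); split.
  exact: mr_prec.
by move=> [|x v] // [vk]; apply: prim_rec_ext vk _ _ => w wk; rewrite (g'g, h'h).
Qed.

Lemma recursive_drop1 k f : recursive_fun k.+1 f ->
  recursive_fun k.+2 (fun w => f (head 0%N w :: behead (behead w))).
Proof.
move=> frec.
pose sel i := if i is j.+1 then j.+2 else 0%N.
apply: recursive_ext (recursive_comp (gs := fun i w => nth 0%N w (sel i)) frec _) _.
  by case=> [|i] ik; apply: recursive_proj.
move=> [|x [|y v]] //= [vk]; congr f; congr cons.
by rewrite (iotaDl 1 0) -map_comp -{2}(take_size v) -(map_nth_iota0 0%N) vk.
Qed.

Lemma recursive_const k c : recursive_fun k (fun _ => c).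
Proof.
elim: c => [|c IH]; first exact: recursive_zero.
exact: recursive_comp1 recursive_succ IH.
Qed.

Lemma recursive_add : recursive_fun 2 (fun v => nth 0 v 0 + nth 0 v 1)%N.
Proof.
apply: recursive_ext (recursive_prec (recursive_proj 1 0 isT)
  (recursive_comp1 recursive_succ (recursive_proj 3 1 isT))) _.
by move=> [|x [|y []]] //= _; elim: x => //= x ->.
Qed.

Lemma recursive_mul : recursive_fun 2 (fun v => nth 0 v 0 * nth 0 v 1)%N.
Proof.
apply: recursive_ext (recursive_prec (recursive_zero 1) (recursive_comp2 recursive_add
  (recursive_proj 3 1 isT) (recursive_proj 3 2 isT))) _.
by move=> [|x [|y []]] //= _; elim: x => //= x ->; rewrite mulSn addnC.
Qed.

Lemma recursive_pred : recursive_fun 1 (fun v => (nth 0 v 0).-1).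
Proof.
apply: recursive_ext (recursive_prec (recursive_zero 0) (recursive_proj 2 0 isT)) _.
by move=> [|[] []].
Qed.

Lemma recursive_subn : recursive_fun 2 (fun v => nth 0 v 0 - nth 0 v 1)%N.
Proof.
have subr := recursive_prec (recursive_proj 1 0 isT)
  (recursive_comp1 recursive_pred (recursive_proj 3 1 isT)).
apply: recursive_ext (recursive_comp2 subr
  (recursive_proj 2 1 isT) (recursive_proj 2 0 isT)) _.
move=> [|x [|y []]] //= _.
by elim: y => /= [|y ->]; rewrite ?subn0 // subnS.
Qed.

Lemma recursive_exp2 : recursive_fun 1 (fun v => 2 ^ nth 0 v 0)%N.
Proof.
apply: recursive_ext (recursive_prec (recursive_const 0 1) (recursive_comp2 recursive_add
  (recursive_proj 2 1 isT) (recursive_proj 2 1 isT))) _.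
by move=> [|x []] //= _; elim: x => //= x ->; rewrite expnS mul2n addnn.
Qed.

Section FractionSums.
Variables (k : nat) (num den : seq nat -> nat).

(* The step function of [prim_rec] receives [[:: x, acc & v]], and
   [head 0 w :: behead (behead w)] recovers the argument [x :: v] of the x-th summand. *)
Definition frac_sum_den (v : seq nat) : nat :=
  prim_rec (fun _ => 1%N)
    (fun w => nth 0 w 1 * den (head 0%N w :: behead (behead w)))%N
    (head 0%N v) (behead v).

Definition frac_sum_num (v : seq nat) : nat :=
  prim_rec (fun _ => 0%N)
    (fun w => let u := head 0%N w :: behead (behead w) in
              nth 0 w 1 * den u + num u * frac_sum_den u)%N
    (head 0%N v) (behead v).

Lemma frac_sum_numS x v : frac_sum_num (x.+1 :: v) =
  (frac_sum_num (x :: v) * den (x :: v) + num (x :: v) * frac_sum_den (x :: v))%N.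
Proof. by []. Qed.

Lemma frac_sum_den_prod x v :
  frac_sum_den (x :: v) = (\prod_(i < x) den ((i : nat) :: v))%N.
Proof. by elim: x => [|x IH]; rewrite ?big_ord0 // big_ord_recr -IH. Qed.

Lemma frac_sum_numE (F : numFieldType) x v : (forall i, 0 < den (i :: v))%N ->
  (frac_sum_num (x :: v))%:R / (frac_sum_den (x :: v))%:R =
  \sum_(i < x) (num ((i : nat) :: v))%:R / (den ((i : nat) :: v))%:R :> F.
Proof.
move=> den_gt0; elim: x => [|x IH]; first by rewrite big_ord0 mul0r.
rewrite big_ord_recr -IH /= frac_sum_numS (frac_sum_den_prod x.+1) big_ord_recr.
rewrite -frac_sum_den_prod.
have Pden : 0 < (frac_sum_den (x :: v))%:R :> F.
  by rewrite ltr0n frac_sum_den_prod prodn_gt0.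
have Pdenx : 0 < (den (x :: v))%:R :> F by rewrite ltr0n.
by rewrite natrD !natrM; field; rewrite !gt_eqF.
Qed.

Hypotheses (num_rec : recursive_fun k.+1 num) (den_rec : recursive_fun k.+1 den).

Lemma recursive_frac_sum_den : recursive_fun k.+1 frac_sum_den.
Proof.
apply: recursive_prec; first exact: recursive_const.
exact: recursive_comp2 recursive_mul (recursive_proj k.+2 1 isT) (recursive_drop1 den_rec).
Qed.

Lemma recursive_frac_sum_num : recursive_fun k.+1 frac_sum_num.
Proof.
apply: recursive_prec; first exact: recursive_const.
exact: recursive_comp2 recursive_add
  (recursive_comp2 recursive_mul (recursive_proj k.+2 1 isT) (recursive_drop1 den_rec))
  (recursive_comp2 recursive_mul (recursive_drop1 num_rec)
                                 (recursive_drop1 recursive_frac_sum_den)).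
Qed.

End FractionSums.

Lemma rat_of_max0 a b d : Num.max (rat_of a b d) 0 = (a - b)%N%:R / d.+1%:R.
Proof.
rewrite /rat_of; case: (leqP a b) => [ab | ba].
  rewrite (eqP ab) mul0r; apply/max_idPr.
  by rewrite pmulr_lle0 ?invr_gt0 ?ltr0n // lerz0 subr_le0 lez_nat.
by rewrite subzn ?(ltnW ba) // max_l // divr_ge0.
Qed.

Lemma rat_of_nat a d : rat_of a 0 d = a%:R / d.+1%:R.
Proof. by rewrite /rat_of subr0. Qed.

Lemma recursive_q2_weighted_sum (q : nat -> seq bool -> nat -> rat) : recursive_q3 q ->
  recursive_q2 (fun s n => \sum_(i < n) 2 ^- i.+1 * Num.max (q i s n) 0).
Proof.
case=> a [b [d [arec brec drec qE]]].
pose num v := (a v - b v)%N; pose den v := ((d v).+1 * 2 ^ (nth 0 v 0).+1)%N.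
have num_rec : recursive_fun 3 num by exact: recursive_comp2 recursive_subn arec brec.
have den_rec : recursive_fun 3 den.
  exact: recursive_comp2 recursive_mul (recursive_comp1 recursive_succ drec)
    (recursive_comp1 recursive_exp2 (recursive_comp1 recursive_succ (recursive_proj 3 0 isT))).
have den_gt0 v : (0 < den v)%N by rewrite muln_gt0 expn_gt0.
(* At stage n the sum runs over i < n, so the count and the stage are both n. *)
have at_stage f : recursive_fun 3 f ->
    recursive_fun 2 (fun v => f [:: nth 0 v 1; nth 0 v 0; nth 0 v 1]).
  by move=> frec; apply: recursive_comp3 frec (recursive_proj 2 1 isT)
    (recursive_proj 2 0 isT) (recursive_proj 2 1 isT).
exists (fun v => frac_sum_num num den [:: nth 0 v 1; nth 0 v 0; nth 0 v 1]),
  (fun _ => 0%N), (fun v => (frac_sum_den den [:: nth 0 v 1; nth 0 v 0; nth 0 v 1]).-1); split.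
- exact/at_stage/recursive_frac_sum_num.
- exact: recursive_zero.
- exact: recursive_comp1 recursive_pred (at_stage _ (recursive_frac_sum_den den_rec)).
- move=> s n /=; rewrite rat_of_nat prednK ?frac_sum_den_prod ?prodn_gt0 //.
  rewrite -frac_sum_den_prod frac_sum_numE //; apply: eq_bigr => i _.
  by rewrite qE rat_of_max0 /num /den natrM natrX invfM mulrCA [2 ^- _ * _]mulrC.
Qed.

Section UpperExpectation.
Variables (R : realType) (lo hi : R).
Hypotheses (lo_ge0 : 0 <= lo) (lo_le_hi : lo <= hi) (hi_le1 : hi <= 1).

Lemma upper_exp_ge (f : bool -> R) p : lo <= p <= hi ->
  p * f true + (1 - p) * f false <= upper_exp lo hi f.
Proof.
move=> pI; have pI' : p \in `[lo, hi] by rewrite in_itv.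
apply: sup_upper_bound; last by exists p.
split; first by exists (p * f true + (1 - p) * f false), p.
have weight_le (q x : R) : 0 <= q <= 1 -> q * x <= `|x|.
  case/andP=> q_ge0 q_le1.
  exact: le_trans (ler_wpM2l q_ge0 (ler_norm x)) (ler_piMl (normr_ge0 x) q_le1).
exists (`|f true| + `|f false|) => _ [p' + <-]; rewrite /= in_itv /= => /andP[lo_p' p'_hi].
have p'_ge0 : 0 <= p' := le_trans lo_ge0 lo_p'.
have p'_le1 : p' <= 1 := le_trans p'_hi hi_le1.
by apply: lerD; apply: weight_le; rewrite ?subr_ge0 ?gerBl p'_ge0 p'_le1.
Qed.

Lemma upper_exp_le_iff (f : bool -> R) c : upper_exp lo hi f <= c <->
  forall p, lo <= p <= hi -> p * f true + (1 - p) * f false <= c.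
Proof.
split=> [fc p pI|fc]; first exact: le_trans (upper_exp_ge f pI) fc.
apply: ge_sup.
  by exists (lo * f true + (1 - lo) * f false), lo; rewrite //= in_itv /= lexx.
by move=> _ [p + <-]; rewrite /= in_itv; apply: fc.
Qed.

Lemma supermartingale_step_iff (T : seq bool -> R) s :
  upper_exp lo hi (fun x => T (rcons s x) - T s) <= 0 <->
  forall p, lo <= p <= hi -> p * T (rcons s true) + (1 - p) * T (rcons s false) <= T s.
Proof.
rewrite upper_exp_le_iff; split=> T_step p /T_step; lra.
Qed.

End UpperExpectation.

Section GeneratedProcess.
Variables (R : realType) (D : seq bool -> bool -> R).

Lemma gen_process_nil : gen_process D [::] = 1.
Proof. by rewrite /gen_process big_ord0. Qed.

Lemma gen_process_rcons s x : gen_process D (rcons s x) = gen_process D s * D s x.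
Proof.
rewrite /gen_process size_rcons big_ord_recr /= nth_rcons ltnn eqxx.
rewrite -cats1 takel_cat // take_size; congr (_ * _); apply: eq_bigr => k _.
by rewrite nth_cat ltn_ord takel_cat // ltnW.
Qed.

Hypothesis D_ge0 : forall s x, 0 <= D s x.

Lemma gen_process_ge0 s : 0 <= gen_process D s.
Proof. by apply: prodr_ge0 => k _. Qed.

Lemma gen_process_le_expn C s : (forall s x, D s x <= C) -> gen_process D s <= C ^+ size s.
Proof.
move=> D_le; rewrite /gen_process -[in C ^+ _](card_ord (size s)) -prodr_const.
by apply: ler_prod => k _; rewrite D_ge0 D_le.
Qed.

Lemma gen_process_test_supermartingale lo hi : 0 <= lo -> lo <= hi -> hi <= 1 ->
  supermart_multiplier lo hi D -> test_supermartingale lo hi (gen_process D).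
Proof.
move=> lo_ge0 lo_le_hi hi_le1 D_mult; split.
- exact: gen_process_ge0.
- exact: gen_process_nil.
move=> s; apply/supermartingale_step_iff => // p pI.
have := le_trans (upper_exp_ge lo_ge0 hi_le1 (D s) pI) (D_mult s).
move/(ler_wpM2l (gen_process_ge0 s)); rewrite !gen_process_rcons; lra.
Qed.

End GeneratedProcess.

Lemma supermart_multiplier_le (R : realType) (lo hi : R) (D : seq bool -> bool -> R) :
  0 < lo -> lo <= hi -> hi < 1 -> (forall s x, 0 <= D s x) ->
  supermart_multiplier lo hi D -> forall s x, D s x <= lo^-1 + (1 - hi)^-1.
Proof.
move=> lo_gt0 lo_le_hi hi_lt1 D_ge0 D_mult s x.
have hi_gap : 0 < 1 - hi by rewrite subr_gt0.
have D_avg_le1 p : lo <= p <= hi -> p * D s true + (1 - p) * D s false <= 1.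
  move=> pI; apply: le_trans (D_mult s).
  by apply: upper_exp_ge pI; apply: ltW => //; apply: le_lt_trans hi_lt1.
have D1 : D s true <= lo^-1.
  rewrite -(ler_pM2l lo_gt0) mulfV ?gt_eqF //.
  have := D_avg_le1 lo; have := D_ge0 s false; rewrite lexx lo_le_hi; nra.
have D0 : D s false <= (1 - hi)^-1.
  rewrite -(ler_pM2l hi_gap) mulfV ?gt_eqF //.
  have := D_avg_le1 hi; have := D_ge0 s true; rewrite lexx lo_le_hi; nra.
have [lo_inv hi_inv] : 0 < lo^-1 /\ 0 < (1 - hi)^-1 by rewrite !invr_gt0.
by case: x; lra.
Qed.

Lemma diagonal_sum_leS (F : numDomainType) (a : nat -> nat -> F) n :
  (forall i n, 0 <= a i n) -> (forall i n, a i n <= a i n.+1) ->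
  \sum_(i < n) a i n <= \sum_(i < n.+1) a i n.+1.
Proof.
move=> a_ge0 a_leS; rewrite big_ord_recr /= -[leLHS]addr0.
by apply: lerD => //; apply: ler_sum => i _.
Qed.

Lemma cvg_diagonal_series (R : realType) (a : nat -> nat -> R) (l : nat -> R) :
  (forall i n, 0 <= a i n) -> (forall i n, a i n <= a i n.+1) ->
  (forall i, a i @ \oo --> l i) -> cvgn (series l) ->
  (fun n => \sum_(i < n) a i n) @ \oo --> limn (series l).
Proof.
move=> a_ge0 a_leS a_cvg l_cvg.
have a_nd i : nondecreasing_seq (a i) by apply/nondecreasing_seqP.
have a_le i n : a i n <= l i.
  rewrite -(cvg_lim _ (a_cvg i)) //.
  exact: nondecreasing_cvgn_le (a_nd i) (cvgP _ (a_cvg i)) n.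
have l_ge0 i : 0 <= l i := le_trans (a_ge0 i 0%N) (a_le i 0%N).
have series_le N : series l N <= limn (series l).
  by apply: nondecreasing_cvgn_le l_cvg N; apply: nondecreasing_series.
set U := fun n => \sum_(i < n) a i n.
have U_nd : nondecreasing_seq U by apply/nondecreasing_seqP => n; apply: diagonal_sum_leS.
have U_le n : U n <= limn (series l).
  by apply: le_trans (series_le n); rewrite /series /= big_mkord ler_sum.
have U_cvg : cvgn U.
  by apply: nondecreasing_is_cvgn U_nd _; exists (limn (series l)) => _ [n _ <-].
suff <- : limn U = limn (series l) by [].
apply/le_anti/andP; split; first by apply: limr_le U_cvg _; apply: nearW.
apply: limr_le l_cvg _; apply: nearW => N.
have partial_cvg : (fun n => \sum_(i < N) a i n) @ \oo --> \sum_(i < N) l i.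
  by apply: cvg_big => [|i _]; [exact: add_continuous | exact: a_cvg].
rewrite /series /= big_mkord; apply: ler_cvg_to partial_cvg (cvg_cst (limn U)) _.
near=> n; apply: le_trans (nondecreasing_cvgn_le U_nd U_cvg n).
rewrite /U -!(big_mkord xpredT (fun i => a i n)).
by apply: (nondecreasing_series (u_ := fun i => a i n)) => //; near: n; exists N.
Unshelve. all: by end_near.
Qed.

Lemma series_inv2S_cvg (R : realType) : series (fun i => 2 ^- i.+1 : R) @ \oo --> (1 : R).
Proof.
have -> : (fun i => 2 ^- i.+1 : R) = (fun i => 1 / (2 ^ (i + 0.+1))%:R).
  by apply/funext => i; rewrite addn1 natrX div1r.
by have := cvg_geometric_series_half (1 : R) 0; rewrite expr0 divr1.
Qed.

Section Mixture.
Variables (R : realType) (G : nat -> seq bool -> R).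
Hypotheses (G_ge0 : forall i s, 0 <= G i s)
           (G_bounded : forall s, exists B, forall i, G i s <= B).

Definition mixture (s : seq bool) : R := limn (series (fun i => 2 ^- i.+1 * G i s)).

Lemma mixture_series_cvg s : cvgn (series (fun i => 2 ^- i.+1 * G i s)).
Proof.
have [B G_le] := G_bounded s.
have B_ge0 : 0 <= B := le_trans (G_ge0 0 s) (G_le 0%N).
apply: (@series_le_cvg _ _ (fun i => B * 2 ^- i.+1)) => [i|i|i|].
- by rewrite mulr_ge0.
- by rewrite mulr_ge0.
- by rewrite mulrC ler_wpM2r.
have -> : series (fun i => B * 2 ^- i.+1) = (fun n => B * series (fun i => 2 ^- i.+1) n).
  by apply/funext => n; rewrite /series /= mulr_sumr.
by apply: is_cvgM; [exact: is_cvg_cst | exact: cvgP _ (@series_inv2S_cvg R)].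
Qed.

Lemma mixture_ge0 s : 0 <= mixture s.
Proof.
rewrite /mixture; apply: (limr_ge (mixture_series_cvg (s := s))); apply: nearW => n.
by apply: sumr_ge0 => i _; rewrite mulr_ge0.
Qed.

Lemma mixture_test_supermartingale lo hi : 0 <= lo -> lo <= hi -> hi <= 1 ->
  (forall i, test_supermartingale lo hi (G i)) -> test_supermartingale lo hi mixture.
Proof.
move=> lo_ge0 lo_le_hi hi_le1 G_test; split.
- exact: mixture_ge0.
- rewrite /mixture; have -> : (fun i => 2 ^- i.+1 * G i [::]) = (fun i => 2 ^- i.+1).
    by apply/funext => i; case: (G_test i) => _ -> _; rewrite mulr1.
  exact: cvg_lim (@series_inv2S_cvg R).
move=> s; apply/supermartingale_step_iff => // p pI.
have G_step i : p * G i (rcons s true) + (1 - p) * G i (rcons s false) <= G i s.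
  by case: (G_test i) => _ _ /(_ s) /supermartingale_step_iff; apply.
have cvg_step x := mixture_series_cvg (s := rcons s x).
apply: ler_cvg_to (cvgD (cvgM (cvg_cst p) (cvg_step true))
  (cvgM (cvg_cst (1 - p)) (cvg_step false))) (mixture_series_cvg (s := s)) _.
apply: nearW => n; rewrite /series /= !fctE /= !mulr_sumr -big_split /=.
apply: ler_sum => i _; have w_ge0 : 0 <= 2 ^- i.+1 :> R by [].
move: (ler_wpM2l w_ge0 (G_step i)); lra.
Qed.

Lemma lower_semicomputable_mixture (q : nat -> seq bool -> nat -> rat) :
  recursive_q3 q -> (forall i s n, q i s n <= q i s n.+1) ->
  (forall i s, (fun n => (ratr (q i s n) : R)) @ \oo --> G i s) ->
  lower_semicomputable mixture.
Proof.
move=> q_rec q_mono q_cvg.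
exists (fun s n => \sum_(i < n) 2 ^- i.+1 * Num.max (q i s n) 0); split.
- exact: recursive_q2_weighted_sum.
- move=> s n; apply: (diagonal_sum_leS (a := fun i n => 2 ^- i.+1 * Num.max (q i s n) 0)).
    by move=> i m; rewrite mulr_ge0 // le_max lexx orbT.
  by move=> i m; rewrite ler_wpM2l // le_max2 ?q_mono.
move=> s; pose a i n := 2 ^- i.+1 * Num.max (ratr (q i s n) : R) 0.
have -> : (fun n => ratr (\sum_(i < n) 2 ^- i.+1 * Num.max (q i s n) 0) : R) =
          (fun n => \sum_(i < n) a i n).
  apply/funext => n; rewrite rmorph_sum; apply: eq_bigr => i _.
  by rewrite rmorphM fmorphV rmorphXn rmorph_nat /a -[0 in RHS](rmorph0 (@ratr R)) -maxr_rat.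
have q_nd i : nondecreasing_seq (fun n => (ratr (q i s n) : R)).
  by apply/nondecreasing_seqP => n; rewrite ler_rat.
have q_le i n : (ratr (q i s n) : R) <= G i s.
  rewrite -(cvg_lim _ (q_cvg i s)) //.
  exact: nondecreasing_cvgn_le (q_nd i) (cvgP _ (q_cvg i s)) n.
rewrite /mixture; apply: cvg_diagonal_series (mixture_series_cvg (s := s)) => [i n|i n|i].
- by rewrite mulr_ge0 // le_max lexx orbT.
- by rewrite ler_wpM2l // le_max2 // ler_rat.
apply: cvgM; first exact: cvg_cst.
apply: squeeze_cvgr (q_cvg i s) (cvg_cst (G i s)); apply: nearW => n.
by rewrite le_max lexx /= ge_max q_le G_ge0.
Qed.

End Mixture.

Theorem lemma5 (R : realType) (lo hi : R)
  (Hlo : 0 < lo) (Hlohi : lo <= hi) (Hhi : hi < 1)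
  (D : nat -> seq bool -> bool -> R)
  (Dnn : forall i s x, 0 <= D i s x)
  (Dmult : forall i, supermart_multiplier lo hi (D i))
  (q : nat -> seq bool -> nat -> rat)
  (qrec : recursive_q3 q)
  (qmono : forall i s n, q i s n <= q i s n.+1)
  (qlim : forall i s, (fun n => (ratr (q i s n) : R)) @ \oo
                        --> gen_process (D i) s) :
  let T := fun s => limn (series (fun i => (2 ^- i.+1 : R) * gen_process (D i) s)) in
  (forall s, cvgn (series (fun i => (2 ^- i.+1 : R) * gen_process (D i) s))) /\
  test_supermartingale lo hi T /\ lower_semicomputable T.
Proof.
move=> T.
have G_ge0 i s : 0 <= gen_process (D i) s by exact: gen_process_ge0.
have G_bounded s : exists B, forall i, gen_process (D i) s <= B.
  exists ((lo^-1 + (1 - hi)^-1) ^+ size s) => i.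
  exact/gen_process_le_expn/supermart_multiplier_le.
have [lo_ge0 hi_le1] : 0 <= lo /\ hi <= 1 by split; apply: ltW.
split; first exact: mixture_series_cvg.
split; last exact: lower_semicomputable_mixture qrec qmono qlim.
apply: mixture_test_supermartingale => // i.
exact: gen_process_test_supermartingale.
Qed.
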